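(* For every strict partition $\lambda$, as formal power series, $$K_\lambda(x_1,x_2,\ldots)=(-1)^{|\lambda|}\, GP_\lambda\!\left(\frac{-x_1}{1-x_1},\frac{-x_2}{1-x_2},\ldots\right).$$
   Context: A strict partition $\lambda=(\lambda_1>\dots>\lambda_\ell>0)$ has shifted shape consisting of the boxes $(i,j)$ with $1\le i\le\ell$, $i\le j\le i+\lambda_i-1$; $|\lambda|=\sum\lambda_i$; boxes $(i,i)$ form the main diagonal. Order $1'<1<2'<2<\cdots$. A weak set-valued shifted tableau of shape $\lambda$ is a filling of the shifted shape with finite nonempty multisets of primed and unprimed positive integers such that: (1) the smallest element in each box is $\ge$ the largest element in the box directly to its left; (2) the smallest element in each box is $\ge$ the largest element in the box directly above it; (3) no primed entries on the main diagonal; (4) each unprimed integer appears in at most one box of each column; (5) each primed integer appears in at most one box of each row. A set-valued shifted tableau is the same but with finite nonempty sets instead of multisets. For either kind, $x^T=\prod_i x_i^{a_i}$ with $a_i$ the number of occurrences of $i$ and $i'$ in $T$, and $|T|$ is the total degree of $x^T$. $K_\lambda=\sum_T x^T$ over weak set-valued shifted tableaux of shape $\lambda$; $GP_\lambda=\sum_T(-1)^{|T|-|\lambda|}x^T$ over set-valued shifted tableaux of shape $\lambda$. *)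

From HB Require Import structures.
From mathcomp Require Import all_boot all_order all_algebra.
Set Implicit Arguments. Unset Strict Implicit. Unset Printing Implicit Defensive.
Import Order.TTheory GRing.Theory Num.Theory.

Definition strict_partition (la : seq nat) : bool :=
  sorted gtn la && all (fun k => 0 < k) la.

(* Shifted shape, 0-indexed: row r (0 <= r < l), columns r <= c <= r + la_r - 1.
   (Paper's box (i,j) is (r,c) = (i-1,j-1); main diagonal is r = c.) *)
Definition in_shape (la : seq nat) (r c : nat) : bool :=
  [&& r < size la, r <= c & c < r + nth 0 la r].

(* All boxes of the shape fit in 'I_N * 'I_N. *)
Definition shN (la : seq nat) : nat := size la + sumn la.

(* Letters: (i, p) with i : 'I_n standing for the integer i+1 and p = primed.
   Total order 1' < 1 < 2' < 2 < ... encoded by the key 2(i+1) - p. *)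
Definition letter (n : nat) := ('I_n * bool)%type.
Definition key n (x : letter n) : nat := (2 * (x.1 + 1) - x.2)%N.

(* A filling assigns to each box a finite multiset of letters, encoded by its
   multiplicity function; multiplicities are bounded by B (harmless). *)
Definition filling (n N B : nat) :=
  {ffun ('I_N * 'I_N) -> {ffun letter n -> 'I_B.+1}}.

Definition occ n N B (F : filling n N B) b (x : letter n) : bool := (0 < F b x)%N.

Definition is_wsvt (la : seq nat) n B (F : filling n (shN la) B) : bool :=
  let bx := ('I_(shN la) * 'I_(shN la))%type in
  [forall b : bx, ~~ in_shape la b.1 b.2 ==> [forall x, F b x == ord0]] &&
  [forall b : bx, in_shape la b.1 b.2 ==> [exists x, occ F b x]] &&
  (* (1),(2): min of a box >= max of the box to its left / directly above *)
  [forall b : bx, [forall b' : bx, [forall x : letter n, [forall y : letter n,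
     [&& in_shape la b.1 b.2, in_shape la b'.1 b'.2, occ F b x, occ F b' y &
        ((b'.1 == b.1 :> nat) && (b'.2.+1 == b.2 :> nat))
        || ((b'.2 == b.2 :> nat) && (b'.1.+1 == b.1 :> nat))]
     ==> (key y <= key x)%N]]]] &&
  [forall b : bx, [forall i : 'I_n, (b.1 == b.2 :> nat) ==> ~~ occ F b (i, true)]] &&
  [forall c : 'I_(shN la), [forall i : 'I_n,
     #|[pred b : 'I_(shN la) * 'I_(shN la) | (b.2 == c) && occ F b (i, false)]| <= 1]] &&
  [forall r : 'I_(shN la), [forall i : 'I_n,
     #|[pred b : 'I_(shN la) * 'I_(shN la) | (b.1 == r) && occ F b (i, true)]| <= 1]].

Definition is_svt (la : seq nat) n B (F : filling n (shN la) B) : bool :=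
  is_wsvt F && [forall b : 'I_(shN la) * 'I_(shN la), [forall x : letter n, (F b x <= 1)%N]].

Definition content n N B (F : filling n N B) (i : 'I_n) : nat :=
  (\sum_(b : 'I_N * 'I_N) (F b (i, false) + F b (i, true)))%N.

(* Coefficient of x_1^{m_1} ... x_n^{m_n} in K_la(x_1, x_2, ...):
   the number of weak set-valued shifted tableaux T with x^T = x^m. *)
Definition Kcoef (la : seq nat) n (m : 'I_n -> nat) : nat :=
  #|[pred F : filling n (shN la) (\sum_i m i) |
       is_wsvt F && [forall i, content F i == m i]]|.

(* Coefficient of x^a in GP_la(x_1, x_2, ...):
   sum over set-valued shifted tableaux T with x^T = x^a of (-1)^(|T|-|la|);
   (-1)^(|T|-|la|) = (-1)^(|T|+|la|). *)
Definition GPcoef (la : seq nat) n (a : 'I_n -> nat) : int :=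
  ((-1) ^+ (\sum_i a i + sumn la)%N *
   (#|[pred F : filling n (shN la) 1 |
        is_svt F && [forall i, content F i == a i]]|)%:Z)%R.

(* Coefficients of the univariate series g(x) = -x/(1-x) = - sum_{j>=1} x^j. *)
Definition gcoef (j : nat) : int := if j == 0%N then 0%R else (-1)%R.

Definition powcoef (a k : nat) : int :=
  ((\poly_(j < k.+1) gcoef j) ^+ a)`_k.

(* Coefficient of x^m in F(g(x_1), g(x_2), ...) where F has coefficients Fc:
   sum over exponent vectors a of Fc(a) * prod_i [x_i^{m_i}] g(x_i)^{a_i}.
   Since g has zero constant term, only a with a_i <= m_i (and a_j = 0 for
   variables not occurring in x^m) contribute; we sum over a_i <= |m|. *)
Definition subst_coef n (Fc : ('I_n -> nat) -> int) (m : 'I_n -> nat) : int :=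
  (\sum_(a : {ffun 'I_n -> 'I_(\sum_i m i).+1})
      Fc (fun i => nat_of_ord (a i)) * \prod_(i < n) powcoef (a i) (m i))%R.

From mathcomp Require Import all_boot all_algebra.
From mathcomp Require Import zify ring.
From Stdlib Require Import FunctionalExtensionality.
Import GRing.Theory.
Set Implicit Arguments. Unset Strict Implicit. Unset Printing Implicit Defensive.

(* A weak set-valued shifted tableau is the same thing as its support, a
   set-valued shifted tableau S, together with a positive multiplicity for every
   entry of S: all five tableau conditions only see which letters occur in which
   box.  Choosing the multiplicities independently, each occurrence of i or i'
   in S contributes x_i + x_i^2 + ... = x_i/(1-x_i), so
   K_la = sum_S prod_i (x_i/(1-x_i))^(c_i(S)) with c(S) the content of S.
   Substituting g(x) = -x/(1-x) in GP_la gives the same sum with the sign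
   (-1)^(|S|-|la|) * (-1)^(c_1(S)+c_2(S)+...) = (-1)^|la|, since |S| = sum_i c_i(S).
   Coefficientwise, x/(1-x) may be truncated to X + ... + X^M with M = |m|. *)

Local Open Scope ring_scope.

Section TruncatedGeometric.
Variable R : comNzRingType.

Definition geom_trunc (M : nat) : {poly R} := \poly_(j < M.+1) (0 < j)%N%:R.

Lemma coef_geom_trunc M i : (geom_trunc M)`_i = ((0 < i) && (i <= M))%N%:R.
Proof. by rewrite coef_poly ltnS; case: (i <= M)%N; rewrite ?andbT ?andbF. Qed.

Lemma coefM_low_eq0 (p q : {poly R}) k :
  (forall i, (i <= k)%N -> p`_i = 0) -> (p * q)`_k = 0.
Proof.
by move=> p_low; rewrite coefM big1 // => j _; rewrite p_low ?mul0r // -ltnS.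
Qed.

Lemma coef_expr_lt_eq0 (p : {poly R}) a i :
  p`_0 = 0 -> (i < a)%N -> (p ^+ a)`_i = 0.
Proof.
move=> p0; elim: a i => [//|a IHa] i lt_ia; rewrite exprS coefM big1 // => j _.
case: j => -[_|j lt_ji] /=; first by rewrite p0 mul0r.
by rewrite IHa ?mulr0 //; lia.
Qed.

Lemma coef_geom_trunc_expr M k a :
  (k <= M)%N -> ((geom_trunc M) ^+ a)`_k = ((geom_trunc k) ^+ a)`_k.
Proof.
move=> le_kM; apply/eqP; rewrite -subr_eq0 -coefB subrXX; apply/eqP.
apply: coefM_low_eq0 => i le_ik.
by rewrite coefB !coef_geom_trunc le_ik (leq_trans le_ik le_kM) subrr.
Qed.

Lemma count_supported_compositions (Q : finType) (A : pred Q) M k :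
  \sum_(g : {ffun Q -> 'I_M.+1})
     ([forall q, (0 < g q)%N == (q \in A)] && (\sum_q (g q : nat) == k)%N)%:R
  = ((geom_trunc M) ^+ #|A|)`_k :> R.
Proof.
pose h q (j : 'I_M.+1) : {poly R} := if (0 < j)%N == (q \in A) then 'X^j else 0.
transitivity ((\sum_(g : {ffun Q -> 'I_M.+1}) \prod_q h q (g q))`_k).
  rewrite coef_sum; apply: eq_bigr => g _.
  have [supp_g|] := boolP [forall q, (0 < g q)%N == (q \in A)]; last first.
    rewrite negb_forall => /existsP[q g_q].
    by rewrite [\prod_q0 _](bigD1 q) //= /h (negbTE g_q) mul0r coef0.
  rewrite (eq_bigr (fun q => 'X^(g q))); last by move=> q _; rewrite /h (forallP supp_g q).
  by rewrite -(big_morph _ (exprD _) (expr0 _)) coefXn eq_sym; case: eqP.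
rewrite -bigA_distr_bigA -prodr_const [in RHS]big_mkcond /=.
apply: (congr1 (fun p : {poly R} => p`_k)).
apply: eq_bigr => q _ /=; rewrite /h /geom_trunc poly_def; case: (q \in A).
  by apply: eq_bigr => j _; case: (0 < j)%N; rewrite ?scale1r ?scale0r.
by rewrite big_ord_recl /= big1 ?addr0.
Qed.

End TruncatedGeometric.

Lemma powcoef_geom_trunc a k : powcoef a k = (-1) ^+ a * ((geom_trunc int k) ^+ a)`_k.
Proof.
rewrite /powcoef; have -> : \poly_(j < k.+1) gcoef j = - geom_trunc int k.
  apply/polyP => i; rewrite coef_poly coefN coef_geom_trunc /gcoef ltnS.
  by case: i => [|i] //=; case: (i.+1 <= k)%N.
by rewrite (exprNn (geom_trunc int k)) -polyC1 -polyCN -rmorphXn coefCM.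
Qed.

Lemma natr_card (R : nzSemiRingType) (T : finType) (P : pred T) :
  #|P|%:R = \sum_(x : T) (P x)%:R :> R.
Proof.
rewrite -sum1_card natr_sum big_mkcond; apply: eq_bigr => x _.
by rewrite unfold_in; case: (P x).
Qed.

Lemma prodr_natr_bool (R : comNzSemiRingType) (I : finType) (P : pred I) :
  \prod_i (P i)%:R = [forall i, P i]%:R :> R.
Proof.
have [allP|] := boolP [forall i, P i].
  by rewrite big1 // => i _; rewrite (forallP allP).
by rewrite negb_forall => /existsP[i /negbTE Pi]; rewrite (bigD1 i) //= Pi mul0r.
Qed.

Lemma sum_ffun_ord_indicator (R : comNzRingType) n M (c : 'I_n -> nat) (F : 'I_n -> nat -> R) :
  \sum_(a : {ffun 'I_n -> 'I_M.+1}) [forall i, c i == a i]%:R * \prod_i F i (a i)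
  = [forall i, c i <= M]%N%:R * \prod_i F i (c i).
Proof.
have [c_le|c_gt] := boolP [forall i, c i <= M]%N; last first.
  rewrite mul0r big1 // => a _; case: forallP => [c_a|]; last by rewrite mul0r.
  by case/forallP: c_gt => i; rewrite (eqP (c_a i)) -ltnS ltn_ord.
pose a0 : {ffun 'I_n -> 'I_M.+1} := [ffun i => inord (c i)].
have a0E i : a0 i = c i :> nat by rewrite ffunE inordK // ltnS (forallP c_le i).
rewrite (bigD1 a0) //= [X in _ + X]big1 ?addr0.
  have -> : [forall i, c i == a0 i] by apply/forallP => i; rewrite a0E.
  by rewrite !mul1r; apply: eq_bigr => i _; rewrite a0E.
move=> a ne_a; case: forallP => [c_a|]; last by rewrite mul0r.
by case/eqP: ne_a; apply/ffunP => i; apply: val_inj => /=; rewrite a0E (eqP (c_a i)).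
Qed.

Definition wsvt_on (la : seq nat) n
   (o : ('I_(shN la) * 'I_(shN la)) -> letter n -> bool) : bool :=
  let bx := ('I_(shN la) * 'I_(shN la))%type in
  [forall b : bx, ~~ in_shape la b.1 b.2 ==> [forall x, ~~ o b x]] &&
  [forall b : bx, in_shape la b.1 b.2 ==> [exists x, o b x]] &&
  [forall b : bx, [forall b' : bx, [forall x : letter n, [forall y : letter n,
     [&& in_shape la b.1 b.2, in_shape la b'.1 b'.2, o b x, o b' y &
        ((b'.1 == b.1 :> nat) && (b'.2.+1 == b.2 :> nat))
        || ((b'.2 == b.2 :> nat) && (b'.1.+1 == b.1 :> nat))]
     ==> (key y <= key x)%N]]]] &&
  [forall b : bx, [forall i : 'I_n, (b.1 == b.2 :> nat) ==> ~~ o b (i, true)]] &&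
  [forall c : 'I_(shN la), [forall i : 'I_n,
     #|[pred b : 'I_(shN la) * 'I_(shN la) | (b.2 == c) && o b (i, false)]| <= 1]%N] &&
  [forall r : 'I_(shN la), [forall i : 'I_n,
     #|[pred b : 'I_(shN la) * 'I_(shN la) | (b.1 == r) && o b (i, true)]| <= 1]%N].

Lemma is_wsvt_occ la n B (F : filling n (shN la) B) : is_wsvt F = wsvt_on (occ F).
Proof.
have zeroE b x : (F b x == ord0) = ~~ occ F b x by rewrite /occ lt0n negbK.
by rewrite /is_wsvt /wsvt_on; under eq_forallb => b do under eq_forallb => x do rewrite zeroE.
Qed.

Lemma eq_is_wsvt la n B1 B2 (F1 : filling n (shN la) B1) (F2 : filling n (shN la) B2) :
  occ F1 =2 occ F2 -> is_wsvt F1 = is_wsvt F2.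
Proof.
move=> eq_occ; rewrite !is_wsvt_occ; congr wsvt_on.
by do 2!apply: functional_extensionality => ?; apply: eq_occ.
Qed.

Section Coefficients.
Variables (la : seq nat) (n : nat) (m : 'I_n -> nat).
Local Notation N := (shN la).
Local Notation M := (\sum_(i < n) m i)%N.
Local Notation bx := ('I_N * 'I_N)%type.

Lemma leq_m_sum i : (m i <= M)%N.
Proof. by rewrite (bigD1 i) //= leq_addr. Qed.

Definition supp (F : filling n N M) : filling n N 1 :=
  [ffun b => [ffun x => inord (occ F b x)]].

Lemma occ_supp F : occ (supp F) =2 occ F.
Proof. by move=> b x; rewrite {1}/occ !ffunE inordK //; case: (occ F b x). Qed.

Lemma filling1E (S : filling n N 1) b x : S b x = occ S b x :> nat.
Proof. by rewrite /occ; case: (S b x) => -[|[|]]. Qed.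

Lemma supp_eq F S : (supp F == S) = [forall b, forall x, occ F b x == occ S b x].
Proof.
apply/eqP/forallP => [<- b|eq_occ]; first by apply/forallP => x; rewrite occ_supp.
apply/ffunP => b; apply/ffunP => x; apply: val_inj.
rewrite !ffunE /= filling1E inordK; last by case: (occ F b x).
by move/forallP: (eq_occ b) => /(_ x) /eqP ->.
Qed.

Lemma is_svt_filling1 (S : filling n N 1) : is_svt S = is_wsvt S.
Proof.
rewrite /is_svt [[forall b, _]](_ : _ = true) ?andbT //.
by apply/forallP => b; apply/forallP => x; rewrite -ltnS ltn_ord.
Qed.

Definition fiber (S : filling n N 1) : int :=
  \sum_(F : filling n N M) ((supp F == S) && [forall i, content F i == m i])%:R.

Lemma Kcoef_fibers : (Kcoef la m)%:Z = \sum_(S : filling n N 1) (is_svt S)%:R * fiber S.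
Proof.
rewrite /Kcoef -natz natr_card.
under [RHS]eq_bigr do rewrite /fiber big_distrr.
rewrite exchange_big /=; apply: eq_bigr => F _.
rewrite (bigD1 (supp F)) //= [X in _ + X]big1 ?addr0.
  by rewrite eqxx is_svt_filling1 -natrM mulnb (eq_is_wsvt (occ_supp F)).
by move=> S /negbTE ne_S; rewrite eq_sym ne_S mulr0.
Qed.

Definition filling_of_mults (G : {ffun 'I_n -> {ffun (bx * bool) -> 'I_M.+1}}) :
  filling n N M := [ffun b => [ffun x => G x.1 (b, x.2)]].

Definition mults_of_filling (F : filling n N M) :
  {ffun 'I_n -> {ffun (bx * bool) -> 'I_M.+1}} := [ffun i => [ffun q => F q.1 (i, q.2)]].

Definition occurrences (S : filling n N 1) (i : 'I_n) : pred (bx * bool) :=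
  [pred q | occ S q.1 (i, q.2)].

Lemma content_card (S : filling n N 1) i : content S i = #|occurrences S i|.
Proof.
rewrite /content -sum1_card [in RHS]big_mkcond /=.
transitivity (\sum_b \sum_(s : bool) if (b, s) \in occurrences S i then 1 else 0)%N.
  apply: eq_bigr => b _; rewrite big_bool /= !inE /= !filling1E addnC.
  by case: (occ S b (i, true)); case: (occ S b (i, false)).
by rewrite pair_bigA; apply: eq_bigr => -[b s].
Qed.

Lemma content_filling_of_mults G i :
  content (filling_of_mults G) i = (\sum_q (G i q : nat))%N.
Proof.
transitivity (\sum_b \sum_(s : bool) (G i (b, s) : nat))%N.
  by apply: eq_bigr => b _; rewrite big_bool /= !ffunE /= addnC.
by rewrite pair_bigA; apply: eq_bigr => -[b s].
Qed.

Lemma fiberE S : fiber S = \prod_(i < n) ((geom_trunc int M) ^+ content S i)`_(m i).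
Proof.
rewrite /fiber (reindex filling_of_mults); last first.
  exists mults_of_filling => [G _|F _];
  by apply/ffunP => i; apply/ffunP => -[x y]; rewrite !ffunE.
under [RHS]eq_bigr do rewrite content_card -count_supported_compositions.
rewrite bigA_distr_bigA; apply: eq_bigr => G _.
rewrite prodr_natr_bool supp_eq; congr (nat_of_bool _)%:R; apply/andP/forallP.
  move=> [/forallP occ_G /forallP content_G] i; apply/andP; split.
    apply/forallP => -[b s]; move/forallP: (occ_G b) => /(_ (i, s)).
    by rewrite /occ !ffunE.
  by rewrite -content_filling_of_mults content_G.
move=> G_i; split; apply/forallP.
  move=> b; apply/forallP => -[i s]; case/andP: (G_i i) => /forallP /(_ (b, s)).
  by rewrite /occ !ffunE.
by move=> i; case/andP: (G_i i); rewrite content_filling_of_mults.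
Qed.

Lemma prod_powcoef (a : 'I_n -> nat) :
  \prod_i powcoef (a i) (m i) =
  (-1) ^+ (\sum_i a i)%N * \prod_i ((geom_trunc int M) ^+ a i)`_(m i).
Proof.
under eq_bigr do rewrite powcoef_geom_trunc -(coef_geom_trunc_expr _ _ (leq_m_sum _)).
by rewrite big_split /= (big_morph _ (exprD (-1 : int)) (expr0 _)).
Qed.

Lemma subst_GPcoef :
  (-1) ^+ sumn la * subst_coef (@GPcoef la n) m =
  \sum_(S : filling n N 1) (is_svt S)%:R * \prod_i ((geom_trunc int M) ^+ content S i)`_(m i).
Proof.
have signs_cancel j k (x y : int) :
    (-1) ^+ k * ((-1) ^+ j * (-1) ^+ k * x * ((-1) ^+ j * y)) = x * y.
  transitivity (((-1) ^+ j) ^+ 2 * ((-1) ^+ k) ^+ 2 * (x * y)); first by ring.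
  by rewrite !sqrr_sign !mul1r.
rewrite /subst_coef big_distrr /=.
under eq_bigr => a _.
  rewrite prod_powcoef /GPcoef exprD signs_cancel.
  rewrite -natz natr_card big_distrl /=.
  under eq_bigr do rewrite -mulnb natrM -mulrA.
  over.
rewrite exchange_big /=; apply: eq_bigr => S _; rewrite -big_distrr /=; congr (_ * _).
rewrite (sum_ffun_ord_indicator M (content S) (fun i k => ((geom_trunc int M) ^+ k)`_(m i))).
have [_|] := boolP [forall i, content S i <= M]%N; first by rewrite mul1r.
rewrite negb_forall => /existsP[i]; rewrite -ltnNge => lt_M_content.
rewrite mul0r (bigD1 i) //= coef_expr_lt_eq0 ?mul0r ?coef_geom_trunc //.
exact: leq_ltn_trans (leq_m_sum i) lt_M_content.
Qed.

End Coefficients.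

(* The identity holds for every shape [la]. *)
Theorem proposition3 (la : seq nat) (hla : strict_partition la)
    (n : nat) (m : 'I_n -> nat) :
  ((Kcoef la m)%:Z = (-1) ^+ sumn la * subst_coef (@GPcoef la n) m)%R.
Proof. by rewrite Kcoef_fibers subst_GPcoef; apply: eq_bigr => S _; rewrite fiberE. Qed.
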